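(* Let $(Y,\preceq,\prec,\to)$ be a solid vector space. The following are equivalent: (i) $Y$ is a normal vector space; (ii) the convergence in $Y$ is generated by a monotone norm on $Y$, i.e. there is a monotone norm $\|\cdot\|$ on $Y$ such that for all sequences $(x_n)$ and $x\in Y$, $x_n\to x$ iff $\|x_n-x\|\to0$; (iii) the convergence in $Y$ is generated by the order topology $\tau$ on $Y$, i.e. $x_n\to x$ iff $x_n\to x$ in $\tau$.
   Context: Vector space with convergence: a real vector space $Y$ with a relation $\to$ between sequences in $Y$ and points of $Y$ (uniqueness of limits not assumed) such that (C1) $x_n\to x$, $y_n\to y$ imply $x_n+y_n\to x+y$; (C2) $x_n\to x$, $\lambda\in\mathbb R$ imply $\lambda x_n\to\lambda x$; (C3) $\lambda_n\to\lambda$ in $\mathbb R$ imply $\lambda_n x\to\lambda x$. $A\subseteq Y$ is open if $x_n\to x\in A$ implies $x_n\in A$ for all but finitely many $n$; closed if $x_n\to x$, $x_n\in A$ $\forall n$ imply $x\in A$; $A^\circ$ is the union of all open subsets of $A$. A cone is a nonempty closed $K$ with $\lambda K\subseteq K$ ($\lambda\ge0$), $K+K\subseteq K$, $K\cap(-K)=\{0\}$; solid if $K\ne\{0\}$, $K^\circ\ne\emptyset$. A vector ordering is a partial order $\preceq$ with (V1) $x\preceq y\Rightarrow x+z\preceq y+z$; (V2) $\lambda\ge0$, $x\preceq y\Rightarrow\lambda x\preceq\lambda y$; (V3) $x_n\to x$, $y_n\to y$, $x_n\preceq y_n$ $\forall n\Rightarrow x\preceq y$. Solid vector space: positive cone $K=\{x:x\succeq0\}$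 solid, with $x\prec y$ iff $y-x\in K^\circ$. Normal: whenever $x_n\preceq y_n\preceq z_n$ for all $n$, $x_n\to x$ and $z_n\to x$, then $y_n\to x$. Monotone norm: $\|x\|\le\|y\|$ whenever $0\preceq x\preceq y$. Order topology: basis the open intervals $(a,b)=\{x:a\prec x\prec b\}$, $a\prec b$. *)

From HB Require Import structures.
From mathcomp Require Import all_boot all_order all_algebra.
From mathcomp Require Import all_classical all_reals topology normedtype sequences.
Set Implicit Arguments. Unset Strict Implicit. Unset Printing Implicit Defensive.
Import Order.TTheory GRing.Theory Num.Theory.
Import numFieldNormedType.Exports.
Local Open Scope classical_set_scope.
Local Open Scope ring_scope.

Section Defs.
Variables (R : realType) (Y : lmodType R).

Definition convergence := (nat -> Y) -> Y -> Prop.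

Definition eventually_in (xs : nat -> Y) (A : set Y) : Prop :=
  exists N : nat, forall n : nat, (N <= n)%N -> A (xs n).

Definition vsc (conv : convergence) : Prop :=
  [/\ (forall xs ys x y, conv xs x -> conv ys y ->
         conv (fun n => xs n + ys n) (x + y)),
      (forall xs x (l : R), conv xs x -> conv (fun n => l *: xs n) (l *: x)) &
      (forall (ls : nat -> R) (l : R) (x : Y), ls @ \oo --> l ->
         conv (fun n => ls n *: x) (l *: x))].

Definition c_open (conv : convergence) (A : set Y) : Prop :=
  forall xs x, conv xs x -> A x -> eventually_in xs A.

Definition c_closed (conv : convergence) (A : set Y) : Prop :=
  forall xs x, conv xs x -> (forall n, A (xs n)) -> A x.

Definition c_interior (conv : convergence) (A : set Y) : set Y :=
  [set x | exists U : set Y, [/\ c_open conv U, U `<=` A & U x]].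

Definition is_cone (conv : convergence) (K : set Y) : Prop :=
  [/\ K !=set0, c_closed conv K,
      (forall (l : R) x, 0 <= l -> K x -> K (l *: x)),
      (forall x y, K x -> K y -> K (x + y)) &
      K `&` (fun x => K (- x)) = [set 0]].

Definition solid_cone (conv : convergence) (K : set Y) : Prop :=
  [/\ is_cone conv K, K <> [set 0] & c_interior conv K !=set0].

Definition vector_ordering (conv : convergence) (le : Y -> Y -> Prop) : Prop :=
  [/\ [/\ (forall x, le x x),
      (forall x y, le x y -> le y x -> x = y) &
      (forall x y z, le x y -> le y z -> le x z)],
      (forall x y z, le x y -> le (x + z) (y + z)),
      (forall (l : R) x y, 0 <= l -> le x y -> le (l *: x) (l *: y)) &
      (forall xs ys x y, conv xs x -> conv ys y -> (forall n, le (xs n) (ys n)) ->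
         le x y)].

Definition positive_cone (le : Y -> Y -> Prop) : set Y := [set x | le 0 x].

Definition solid_vector_space (conv : convergence) (le : Y -> Y -> Prop) : Prop :=
  [/\ vsc conv, vector_ordering conv le & solid_cone conv (positive_cone le)].

Definition slt (conv : convergence) (le : Y -> Y -> Prop) (x y : Y) : Prop :=
  c_interior conv (positive_cone le) (y - x).

Definition normal_vector_space (conv : convergence) (le : Y -> Y -> Prop) : Prop :=
  forall xs ys zs x, (forall n, le (xs n) (ys n) /\ le (ys n) (zs n)) ->
    conv xs x -> conv zs x -> conv ys x.

Definition is_norm (nrm : Y -> R) : Prop :=
  [/\ (forall x, 0 <= nrm x),
      (forall x, nrm x = 0 -> x = 0),
      (forall (l : R) x, nrm (l *: x) = `|l| * nrm x) &
      (forall x y, nrm (x + y) <= nrm x + nrm y)].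

Definition monotone_norm (le : Y -> Y -> Prop) (nrm : Y -> R) : Prop :=
  is_norm nrm /\ (forall x y, le 0 x -> le x y -> nrm x <= nrm y).

Definition conv_generated_by_monotone_norm (conv : convergence)
    (le : Y -> Y -> Prop) : Prop :=
  exists nrm : Y -> R, monotone_norm le nrm /\
    (forall xs x, conv xs x <-> (fun n => nrm (xs n - x)) @ \oo --> (0 : R)).

Definition open_interval (conv : convergence) (le : Y -> Y -> Prop) (a b : Y) : set Y :=
  [set x | slt conv le a x /\ slt conv le x b].

Definition order_open (conv : convergence) (le : Y -> Y -> Prop) (U : set Y) : Prop :=
  forall x, U x -> exists a b, [/\ slt conv le a b,
     open_interval conv le a b x & open_interval conv le a b `<=` U].

Definition order_conv (conv : convergence) (le : Y -> Y -> Prop) (xs : nat -> Y) (x : Y) : Prop :=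
  forall U, order_open conv le U -> U x -> eventually_in xs U.

Definition conv_generated_by_order_topology (conv : convergence)
    (le : Y -> Y -> Prop) : Prop :=
  forall xs x, conv xs x <-> order_conv conv le xs x.

End Defs.

(* Fix an interior point e of the positive cone K.  Since y/(n+1) + e -> e and
   the interior of K is open, e dominates a multiple of every y, so the
   order-unit norm  p(y) = inf {t >= 0 | -t e <= y <= t e}  is finite; by (V3)
   the infimum is attained, and p is a monotone norm.  Every convergent sequence
   converges in the order topology, and convergence in the order topology forces
   p(x_n - x) -> 0 because the intervals (x - eps e, x + eps e) are open.
   Conversely, if Y is normal, -p(x_n - x) e <= x_n - x <= p(x_n - x) e squeezes
   x_n - x to 0.  Finally, a monotone norm and the order topology both satisfy
   the sandwich rule, so a convergence generated by either is normal. *)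

From mathcomp Require Import all_boot all_order all_algebra.
From mathcomp Require Import all_classical all_reals topology normedtype sequences.
Set Implicit Arguments. Unset Strict Implicit. Unset Printing Implicit Defensive.
Import Order.TTheory GRing.Theory Num.Theory.
Import numFieldNormedType.Exports.
Local Open Scope classical_set_scope.
Local Open Scope ring_scope.

Section VectorSpaceWithConvergence.
Variables (R : realType) (Y : lmodType R) (cv : convergence Y).
Hypothesis hcv : vsc cv.

Lemma cvD xs ys x y : cv xs x -> cv ys y -> cv (fun n => xs n + ys n) (x + y).
Proof. by case: hcv => D _ _; apply: D. Qed.

Lemma cvZr xs x (l : R) : cv xs x -> cv (fun n => l *: xs n) (l *: x).
Proof. by case: hcv => _ Z _; apply: Z. Qed.

Lemma cvZl (ls : nat -> R) (l : R) x :
  ls @ \oo --> l -> cv (fun n => ls n *: x) (l *: x).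
Proof. by case: hcv => _ _ Z; apply: Z. Qed.

Lemma cv_cst x : cv (fun=> x) x.
Proof.
have : cv (fun=> 1 *: x) (1 *: x) by apply: cvZl; apply: cvg_cst.
by rewrite scale1r.
Qed.

Lemma cvDr xs x k : cv xs x -> cv (fun n => xs n + k) (x + k).
Proof. by move=> h; apply: cvD h (cv_cst k). Qed.

Lemma cvN xs x : cv xs x -> cv (fun n => - xs n) (- x).
Proof. by move/(cvZr (-1)); rewrite scaleN1r; under eq_fun do rewrite scaleN1r. Qed.

End VectorSpaceWithConvergence.

Section OrderedVectorSpace.
Variables (R : realType) (Y : lmodType R) (cv : convergence Y) (le : Y -> Y -> Prop).
Hypotheses (hcv : vsc cv) (hle : vector_ordering cv le).

Local Notation K := (positive_cone le).
Local Notation intK := (c_interior cv (positive_cone le)).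

Lemma vle_antisym x y : le x y -> le y x -> x = y.
Proof. by case: hle => [[_ A _] _ _ _]; apply: A. Qed.

Lemma vle_trans x y z : le x y -> le y z -> le x z.
Proof. by case: hle => [[_ _ T] _ _ _]; apply: T. Qed.

Lemma vle_addr x y z : le x y -> le (x + z) (y + z).
Proof. by case: hle => [_ D _ _]; apply: D. Qed.

Lemma vle_scale (l : R) x y : 0 <= l -> le x y -> le (l *: x) (l *: y).
Proof. by case: hle => [_ _ Z _]; apply: Z. Qed.

Lemma vle_lim xs ys x y :
  cv xs x -> cv ys y -> (forall n, le (xs n) (ys n)) -> le x y.
Proof. by case: hle => [_ _ _ L]; apply: L. Qed.

Lemma vle_subr_ge0 x y : le 0 (y - x) <-> le x y.
Proof.
split=> [/(vle_addr x)|/(vle_addr (- x))]; last by rewrite subrr.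
by rewrite add0r subrK.
Qed.

Lemma vle_opp x y : le x y -> le (- y) (- x).
Proof.
move=> /vle_subr_ge0 h; apply/vle_subr_ge0.
by rewrite opprK addrC.
Qed.

Lemma vle_add x y z w : le x y -> le z w -> le (x + z) (y + w).
Proof.
move=> /(vle_addr z) h1 /(vle_addr y) h2; apply: vle_trans h1 _.
by rewrite addrC [y + w]addrC.
Qed.

Lemma eventually_in_and (xs ys : nat -> Y) (A B : set Y) :
  eventually_in xs A -> eventually_in ys B ->
  exists N, forall n, (N <= n)%N -> A (xs n) /\ B (ys n).
Proof.
move=> [N1 h1] [N2 h2]; exists (maxn N1 N2) => n; rewrite geq_max => /andP[n1 n2].
by split; [apply: h1 | apply: h2].
Qed.

Lemma coneint_open : c_open cv intK.
Proof.
move=> xs x hx [U [oU UK Ux]]; have [N hN] := oU _ _ hx Ux.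
by exists N => n /hN Un; exists U.
Qed.

Lemma coneint_sub x : intK x -> K x.
Proof. by case=> U [_ UK Ux]; apply: UK. Qed.

Lemma coneint_addr u k : intK u -> K k -> intK (u + k).
Proof.
case=> U [oU UK Uu] Kk; exists (fun y => U (y - k)); split.
- by move=> xs x /(cvDr hcv (- k)) hx /(oU _ _ hx).
- by move=> y /UK Uy; have := vle_add Uy Kk; rewrite addr0 subrK.
- by rewrite /= addrK.
Qed.

Lemma coneint_scale (l : R) u : 0 < l -> intK u -> intK (l *: u).
Proof.
move=> l0 [U [oU UK Uu]]; have l_neq0 : l != 0 by rewrite gt_eqF.
exists (fun y => U (l^-1 *: y)); split.
- by move=> xs x /(cvZr hcv l^-1) hx /(oU _ _ hx).
- move=> y /UK /(vle_scale (ltW l0)).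
  by rewrite scaler0 scalerA divff // scale1r.
- by rewrite /= scalerA mulVf // scale1r.
Qed.

Lemma slt_lt_le a b c : slt cv le a b -> le b c -> slt cv le a c.
Proof.
rewrite /slt => ab /vle_subr_ge0 bc.
by have := coneint_addr ab bc; rewrite addrC addrA subrK addrC.
Qed.

Lemma slt_le_lt a b c : le a b -> slt cv le b c -> slt cv le a c.
Proof.
rewrite /slt => /vle_subr_ge0 ab bc.
by have := coneint_addr bc ab; rewrite addrA subrK.
Qed.

Lemma slt_trans a b c : slt cv le a b -> slt cv le b c -> slt cv le a c.
Proof. by move=> ab /coneint_sub /vle_subr_ge0; apply: slt_lt_le. Qed.

Lemma open_interval_order_open a b : order_open cv le (open_interval cv le a b).
Proof. by move=> y [ay yb]; exists a, b; split => //; apply: slt_trans ay yb. Qed.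

Lemma order_conv_of_cv xs x : cv xs x -> order_conv cv le xs x.
Proof.
move=> hx U oU Ux; have [a [b [_ [ax xb] sU]]] := oU x Ux.
have ca := cvDr hcv (- a) hx.
have cb : cv (fun n => b - xs n) (b - x) by apply: cvD (cv_cst hcv b) (cvN hcv hx).
have [N hN] := eventually_in_and (coneint_open ca ax) (coneint_open cb xb).
by exists N => n /hN [h1 h2]; apply: sU.
Qed.

Lemma normal_of_order_topology :
  conv_generated_by_order_topology cv le -> normal_vector_space cv le.
Proof.
move=> gen xs ys zs x hb /gen hx /gen hz; apply/gen => U oU Ux.
have [a [b [_ abx sU]]] := oU x Ux.
have oI := @open_interval_order_open a b.
have [N hN] := eventually_in_and (hx _ oI abx) (hz _ oI abx).
exists N => n /hN [[axn _] [_ zb]]; have [xy yz] := hb n.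
by apply: sU; split; [apply: slt_lt_le axn xy | apply: slt_le_lt yz zb].
Qed.

(* A monotone norm only compares elements of K, so the sandwich is shifted to
   0 <= y_n - x_n <= z_n - x_n. *)
Lemma normal_of_monotone_norm :
  conv_generated_by_monotone_norm cv le -> normal_vector_space cv le.
Proof.
move=> [nrm [[[n_ge0 _ nZ nD] n_mono] gen]] xs ys zs x hb /gen hx /gen hz.
have nN v : nrm (- v) = nrm v by rewrite -scaleN1r nZ normrN normr1 mul1r.
apply/gen; have := cvgD hz (cvgD hx hx); rewrite !addr0 => /(_ _ _) bound.
apply: (squeeze_cvgr _ (cvg_cst 0) bound); exists 0%N => // n _ /=.
rewrite n_ge0 /= !fctE.
have [xy yz] := hb n.
have yx_zx : nrm (ys n - xs n) <= nrm (zs n - x) + nrm (xs n - x).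
  apply: (@le_trans _ _ (nrm (zs n - xs n))).
    by apply: n_mono; [apply/vle_subr_ge0 | apply: vle_addr].
  rewrite -(nN (xs n - x)); apply: le_trans (nD _ _).
  by rewrite opprB addrA subrK.
have -> : ys n - x = (ys n - xs n) + (xs n - x) by rewrite addrA subrK.
by apply: le_trans (nD _ _) _; rewrite addrA lerD2r.
Qed.

Section OrderUnitNorm.
Variable e : Y.
Hypothesis he : intK e.

Definition order_bounded (t : R) (y : Y) : Prop := le (- (t *: e)) y /\ le y (t *: e).

Definition order_unit_norm (y : Y) : R :=
  inf [set t : R | 0 <= t /\ order_bounded t y].

Local Notation p := order_unit_norm.

Lemma unit_ge0 : le 0 e.
Proof. exact: coneint_sub he. Qed.

Lemma vle_scale_unit (s t : R) : s <= t -> le (s *: e) (t *: e).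
Proof.
move=> st; apply/vle_subr_ge0; rewrite -scalerBl.
by have := vle_scale (l := t - s) _ unit_ge0; rewrite scaler0 subr_ge0; apply.
Qed.

Lemma order_boundedW s t y : s <= t -> order_bounded s y -> order_bounded t y.
Proof.
move=> /vle_scale_unit st [lo hi]; split; last exact: vle_trans hi st.
exact: vle_trans (vle_opp st) lo.
Qed.

Lemma order_boundedN t y : order_bounded t y -> order_bounded t (- y).
Proof. by move=> [/vle_opp lo /vle_opp hi]; rewrite opprK in lo. Qed.

Lemma order_boundedZ (l : R) t y :
  order_bounded t y -> order_bounded (`|l| * t) (l *: y).
Proof.
have pos l' t' y' : 0 <= l' -> order_bounded t' y' -> order_bounded (l' * t') (l' *: y').
  move=> l0 [lo hi]; rewrite /order_bounded -scalerA; split; last exact: vle_scale.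
  by rewrite -scalerN; apply: vle_scale.
have [l0|l0] := leP 0 l; first by rewrite ger0_norm //; apply: pos.
rewrite ltr0_norm // -[l]opprK scaleNr opprK => /(pos (- l)) b.
by apply: order_boundedN; apply: b; rewrite oppr_ge0 ltW.
Qed.

(* e + y/(n+1) -> e lies eventually in the open interior of K. *)
Lemma exists_lower_bound y : exists t : R, 0 <= t /\ le (- (t *: e)) y.
Proof.
have c := cvDr hcv e (cvZl hcv y (@cvg_harmonic R)).
rewrite scale0r add0r in c.
have [N /(_ N (leqnn N)) /coneint_sub hN] := coneint_open c he.
have := vle_scale (ler0n _ N.+1) hN.
rewrite scaler0 scalerDr scalerA /= mulfV ?pnatr_eq0 // scale1r => h.
by exists N.+1%:R; split => //; apply/vle_subr_ge0; rewrite opprK.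
Qed.

Lemma exists_order_bound y : exists t : R, 0 <= t /\ order_bounded t y.
Proof.
have [s [s0 lo]] := exists_lower_bound y.
have [t [t0 /vle_opp hi]] := exists_lower_bound (- y); rewrite !opprK in hi.
exists (Num.max s t); split; first by rewrite le_max s0.
split.
- by apply: vle_trans lo; apply/vle_opp/vle_scale_unit; rewrite le_max lexx.
- by apply: vle_trans hi _; apply: vle_scale_unit; rewrite le_max lexx orbT.
Qed.

Lemma order_bounded_closed t y :
  (forall n, order_bounded (t + harmonic n) y) -> order_bounded t y.
Proof.
move=> hb; have tn : (fun n => t + harmonic n) @ \oo --> t.
  by have := cvgD (cvg_cst t) (@cvg_harmonic R); rewrite addr0; apply.
have c := cvZl hcv e tn; split.
- by apply: (vle_lim (cvN hcv c) (cv_cst hcv y)) => n; case: (hb n).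
- by apply: (vle_lim (cv_cst hcv y) c) => n; case: (hb n).
Qed.

Lemma order_unit_norm_le y t : 0 <= t -> order_bounded t y -> p y <= t.
Proof. by move=> t0 bt; apply: ge_inf; [exists 0 => s [] | split]. Qed.

Lemma order_unit_norm_ge0 y : 0 <= p y.
Proof.
apply: lb_le_inf => [|t []//].
by have [t ht] := exists_order_bound y; exists t.
Qed.

Lemma order_bounded_norm y : order_bounded (p y) y.
Proof.
apply: order_bounded_closed => n.
have lt_n : p y < p y + harmonic n by rewrite ltrDl harmonic_gt0.
have [t ht] := exists_order_bound y.
have [s [_ bs] ps] := inf_lt (ex_intro _ t ht) lt_n.
exact: order_boundedW (ltW ps) bs.
Qed.

Lemma order_unit_norm_eq0 y : p y = 0 -> y = 0.
Proof.
move=> py0; have := order_bounded_norm y.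
by rewrite /order_bounded py0 scale0r oppr0 => -[lo hi]; apply: vle_antisym.
Qed.

Lemma order_unit_normZ (l : R) y : p (l *: y) = `|l| * p y.
Proof.
have le_Z l' y' : p (l' *: y') <= `|l'| * p y'.
  apply: order_unit_norm_le; first by rewrite mulr_ge0 ?order_unit_norm_ge0.
  exact/order_boundedZ/order_bounded_norm.
apply/eqP; rewrite eq_le le_Z /=.
have [->|l0] := eqVneq l 0; first by rewrite normr0 mul0r order_unit_norm_ge0.
have := ler_wpM2l (normr_ge0 l) (le_Z l^-1 (l *: y)).
by rewrite scalerA mulVf // scale1r normfV mulrA mulfV ?normr_eq0 // mul1r.
Qed.

Lemma order_unit_normD x y : p (x + y) <= p x + p y.
Proof.
apply: order_unit_norm_le; first by rewrite addr_ge0 ?order_unit_norm_ge0.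
have [lx hx] := order_bounded_norm x; have [ly hy] := order_bounded_norm y.
by rewrite /order_bounded scalerDl opprD; split; apply: vle_add.
Qed.

Lemma order_unit_norm_monotone : monotone_norm le p.
Proof.
split; first split.
- exact: order_unit_norm_ge0.
- exact: order_unit_norm_eq0.
- exact: order_unit_normZ.
- exact: order_unit_normD.
move=> x y x0 xy; apply: order_unit_norm_le; first exact: order_unit_norm_ge0.
have [lo hi] := order_bounded_norm y; split; last exact: vle_trans xy hi.
apply: vle_trans x0; have := vle_opp (vle_scale_unit (order_unit_norm_ge0 y)).
by rewrite scale0r oppr0.
Qed.

Lemma order_unit_norm_cvg_of_order_conv xs x :
  order_conv cv le xs x -> (fun n => p (xs n - x)) @ \oo --> (0 : R).
Proof.
move=> hx; apply/cvgr0Pnorm_le => eps eps0.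
have eps_e := coneint_scale eps0 he.
have lo : slt cv le (x - eps *: e) x by rewrite /slt opprB addrC subrK.
have hi : slt cv le x (x + eps *: e) by rewrite /slt [x + _]addrC addrK.
have [N hN] := hx _ (@open_interval_order_open _ _) (conj lo hi).
exists N => // n /hN [/coneint_sub l /coneint_sub h] /=.
rewrite ger0_norm ?order_unit_norm_ge0 //; apply: order_unit_norm_le (ltW eps0) _.
split; apply/vle_subr_ge0.
- by move: l; rewrite opprB addrCA addrC opprK.
- by rewrite opprB addrCA addrA.
Qed.

Lemma cv_of_order_unit_norm_cvg xs x : normal_vector_space cv le ->
  (fun n => p (xs n - x)) @ \oo --> (0 : R) -> cv xs x.
Proof.
move=> normal /(cvZl hcv e); rewrite scale0r => c.
have := cvN hcv c; rewrite oppr0 => c'.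
have := normal _ (fun n => xs n - x) _ 0 (fun n => order_bounded_norm (xs n - x)) c' c.
move=> /(cvDr hcv x); rewrite add0r.
by under eq_fun do rewrite subrK.
Qed.

End OrderUnitNorm.
End OrderedVectorSpace.

Theorem theorem7p9 (R : realType) (Y : lmodType R) (cv : convergence Y)
    (le : Y -> Y -> Prop) :
  solid_vector_space cv le ->
  (normal_vector_space cv le <-> conv_generated_by_monotone_norm cv le) /\
  (normal_vector_space cv le <-> conv_generated_by_order_topology cv le).
Proof.
move=> [hcv hle [_ _ [e he]]].
have order_conv_norm := order_unit_norm_cvg_of_order_conv hcv hle he.
have to_cv := cv_of_order_unit_norm_cvg hcv hle he.
split; split.
- move=> normal; exists (order_unit_norm le e).
  split; first exact (order_unit_norm_monotone hcv hle he).
  move=> xs x; split; last exact: to_cv.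
  by move/(order_conv_of_cv hcv)/order_conv_norm.
- exact: normal_of_monotone_norm hle.
- move=> normal xs x; split; first exact: (order_conv_of_cv hcv (le := le)).
  by move/order_conv_norm; apply: to_cv.
- exact: normal_of_order_topology hcv hle.
Qed.
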